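(* If $\Delta(w)=\emptyset$ for some $w\in\mathbb Z_{d,\ell}$, then $\kappa=1$ and $w=-\mu_1$.
   Context: Let $\mathbf K$ be a field and $\ell\geq 2$ an integer. Let $L=a_n\phi_\ell^n+\dots+a_0$ with $n\geq1$, $a_i\in\mathbf K[z]$, $a_0a_n\neq0$, where $\phi_\ell(f)(z)=f(z^\ell)$. Let $\mathcal P(L)=\{(\ell^i,j): 0\le i\le n,\ j\in\operatorname{supp} a_i\}$. The Newton polygon of $L$ is the convex hull of $\{(\ell^i,j): 0\le i\le n,\ j\geq\operatorname{val} a_i\}\subset\mathbb R^2$; its non-vertical edges have pairwise distinct slopes $\mu_1<\dots<\mu_\kappa$. Let $d\geq1$ be a common multiple of the denominators of the $\mu_k$ and $\mathbb Z_{d,\ell}=\bigcup_{i\geq0}\frac{1}{d\ell^i}\mathbb Z$. Define $\psi(v)=\min\{v\ell^i+j:(\ell^i,j)\in\mathcal P(L)\}$ and $\Delta(w)=\left\{\frac{\psi(w)-\beta}{\ell^\alpha}:(\ell^\alpha,\beta)\in\mathcal P(L)\right\}\setminus\{w\}$. *)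

From HB Require Import structures.
From mathcomp Require Import all_boot all_order all_algebra.
Set Implicit Arguments. Unset Strict Implicit. Unset Printing Implicit Defensive.
Import Order.TTheory GRing.Theory Num.Theory.
Local Open Scope ring_scope.

(* The operator L = a_n phi_l^n + ... + a_0 is represented by its list of
   coefficients  a : nat -> {poly K}  (only a 0, ..., a n are relevant). *)

Definition valp (K : fieldType) (p : {poly K}) : nat := find (fun c => c != 0) p.

Definition suppp (K : fieldType) (p : {poly K}) : seq nat :=
  [seq j <- iota 0 (size p) | p`_j != 0].

Definition PL (K : fieldType) (l n : nat) (a : nat -> {poly K}) : seq (rat * rat) :=
  [seq ((l ^ i)%:R, j%:R) | i <- iota 0 n.+1, j <- suppp (a i)].

Definition psi (K : fieldType) (l n : nat) (a : nat -> {poly K}) (v : rat) : rat :=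
  let p0 := head (0, 0) (PL l n a) in
  \big[Num.min/ v * p0.1 + p0.2]_(p <- PL l n a) (v * p.1 + p.2).

Definition Delta (K : fieldType) (l n : nat) (a : nat -> {poly K}) (w : rat) : seq rat :=
  [seq x <- [seq (psi l n a w - p.2) / p.1 | p <- PL l n a] | x != w].

Definition NPgen (K : fieldType) (l n : nat) (a : nat -> {poly K}) (p : rat * rat) : Prop :=
  exists i : nat, (i <= n)%N /\ a i != 0 /\ p.1 = (l ^ i)%:R /\ (valp (a i))%:R <= p.2.

Definition newton_polygon (K : fieldType) (l n : nat) (a : nat -> {poly K}) (p : rat * rat) : Prop :=
  exists (k : nat) (c : 'I_k -> rat) (q : 'I_k -> rat * rat),
    (forall i, 0 <= c i) /\ \sum_(i < k) c i = 1 /\ (forall i, NPgen l n a (q i)) /\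
    p = (\sum_(i < k) c i * (q i).1, \sum_(i < k) c i * (q i).2).

(* mu is the slope of a non-vertical edge of the Newton polygon: the line
   y = mu x + c supports the polygon (the polygon lies above it; the polygon is
   unbounded upwards, so no non-vertical supporting line has it below) and
   meets it in a segment (at least two distinct points). *)
Definition edge_slope (K : fieldType) (l n : nat) (a : nat -> {poly K}) (mu : rat) : Prop :=
  exists c : rat,
    (forall p, newton_polygon l n a p -> mu * p.1 + c <= p.2) /\
    exists p q, newton_polygon l n a p /\ newton_polygon l n a q /\ p <> q /\
      p.2 = mu * p.1 + c /\ q.2 = mu * q.1 + c.

Definition Zdl (d l : nat) (w : rat) : Prop :=
  exists (i : nat) (m : int), w = m%:~R / (d * l ^ i)%:R.

(* If [Delta(w)] is empty, every point [(l^i, j)] of [P(L)] satisfies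
   [(psi(w) - j) / l^i = w], i.e. lies on the line [y = psi(w) - w x].  So do
   the lowest points [(l^i, val a_i)]: the Newton polygon lies above this line,
   within the strip [1 <= x <= l^n], and touches it at both ends since
   [a_0, a_n <> 0].  For a supporting line [y = mu x + c] the affine gap
   [(mu + w) x + c - psi(w)] is then [<= 0] at [x = 1] and [x = l^n], hence on
   the whole strip, and [>= 0] at every contact point; two distinct contact
   points therefore force [mu = -w]. *)
From HB Require Import structures.
From mathcomp Require Import all_boot all_order all_algebra.
From mathcomp Require Import ring lra.
Set Implicit Arguments. Unset Strict Implicit. Unset Printing Implicit Defensive.
Import Order.TTheory GRing.Theory Num.Theory.
Local Open Scope ring_scope.

Lemma affine_le0_between (R : realFieldType) (m b x0 x1 x : R) :
  x0 < x1 -> x0 <= x <= x1 -> m * x0 + b <= 0 -> m * x1 + b <= 0 ->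
  m * x + b <= 0.
Proof.
move=> x01 /andP[x0x xx1] e0 e1.
have convex : (x1 - x0) * (m * x + b)
    = (x1 - x) * (m * x0 + b) + (x - x0) * (m * x1 + b) by ring.
rewrite -(pmulr_rle0 _ (x := x1 - x0)) ?subr_gt0 // convex.
by rewrite -oppr_ge0 opprD -!mulrN; apply: addr_ge0; apply: mulr_ge0; lra.
Qed.

Section SupportingLine.

Variables (S : rat * rat -> Prop) (x0 x1 c0 w : rat).
Hypothesis x01 : x0 < x1.
Hypothesis S_abscissa : forall p, S p -> x0 <= p.1 <= x1.
Hypothesis S_above : forall p, S p -> c0 - w * p.1 <= p.2.
Hypothesis S_left : S (x0, c0 - w * x0).
Hypothesis S_right : S (x1, c0 - w * x1).

Lemma supporting_line_contact (mu c : rat) (p : rat * rat) :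
  (forall q, S q -> mu * q.1 + c <= q.2) -> S p -> p.2 = mu * p.1 + c ->
  (mu + w) * p.1 + (c - c0) = 0.
Proof.
move=> supp Sp on_line.
have := supp _ S_left; have := supp _ S_right; have := S_above Sp.
rewrite /= => above right left.
apply/eqP; rewrite eq_le; apply/andP; split; last by lra.
by apply: (affine_le0_between x01); [exact: S_abscissa | lra | lra].
Qed.

Lemma supporting_line_slopeE (mu : rat) :
  (exists c : rat,
    (forall p, S p -> mu * p.1 + c <= p.2) /\
    exists p q, S p /\ S q /\ p <> q /\
      p.2 = mu * p.1 + c /\ q.2 = mu * q.1 + c) <-> mu = - w.
Proof.
split.
- move=> [c [supp [p [q [Sp [Sq [neq_pq [p_on q_on]]]]]]]].
  have := supporting_line_contact supp Sp p_on.
  have := supporting_line_contact supp Sq q_on.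
  move=> eq_q eq_p.
  have /eqP : (mu + w) * (p.1 - q.1) = 0 by rewrite mulrBr; lra.
  rewrite mulf_eq0 => /orP[/eqP | /eqP p1q1]; first by lra.
  have eq1 : p.1 = q.1 by lra.
  have eq2 : p.2 = q.2 by rewrite p_on q_on eq1.
  by case: neq_pq; case: p q {Sp Sq p_on q_on eq_p eq_q p1q1} eq1 eq2 => ? ? [? ?] /= -> ->.
- move=> ->; exists c0; split=> [p /S_above|]; first by lra.
  exists (x0, c0 - w * x0), (x1, c0 - w * x1); do 2 split=> //.
  by split=> [[/eqP]|]; [rewrite lt_eqF | split=> /=; ring].
Qed.

End SupportingLine.

Section NewtonPolygon.

Variables (K : fieldType) (l n : nat) (a : nat -> {poly K}).

Lemma newton_polygon_halfplane (al be ga : rat) (p : rat * rat) :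
  (forall q, NPgen l n a q -> 0 <= al * q.1 + be * q.2 + ga) ->
  newton_polygon l n a p -> 0 <= al * p.1 + be * p.2 + ga.
Proof.
move=> gen_ge0 [k [c [q [c_ge0 [c_sum1 [q_gen ->]]]]]] /=.
have -> : al * (\sum_(i < k) c i * (q i).1) + be * (\sum_(i < k) c i * (q i).2) + ga
    = \sum_(i < k) c i * (al * (q i).1 + be * (q i).2 + ga).
  symmetry; rewrite (eq_bigr (fun i => al * (c i * (q i).1) + be * (c i * (q i).2) + c i * ga));
    last by move=> i _; ring.
  by rewrite !big_split /= -!mulr_sumr -mulr_suml c_sum1 mul1r.
by apply: sumr_ge0 => i _; apply: mulr_ge0 => //; apply: gen_ge0.
Qed.

Lemma NPgen_newton_polygon (p : rat * rat) : NPgen l n a p -> newton_polygon l n a p.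
Proof.
move=> gen_p; exists 1%N, (fun _ => 1), (fun _ => p).
by rewrite !big_ord1 !mul1r; case: p gen_p.
Qed.

Hypothesis l_gt0 : (0 < l)%N.

Lemma newton_polygon_abscissa (p : rat * rat) :
  newton_polygon l n a p -> 1 <= p.1 <= (l ^ n)%:R.
Proof.
move=> NPp; apply/andP; split; rewrite -subr_ge0.
- rewrite (_ : p.1 - 1 = 1 * p.1 + 0 * p.2 + - 1); last by ring.
  apply: (newton_polygon_halfplane _ NPp) => q [i [_ [_ [-> _]]]].
  by rewrite mul1r mul0r addr0 subr_ge0 ler1n expn_gt0 l_gt0.
- rewrite (_ : _ - p.1 = -1 * p.1 + 0 * p.2 + (l ^ n)%:R); last by ring.
  apply: (newton_polygon_halfplane _ NPp) => q [i [le_in [_ [-> _]]]].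
  by rewrite mul0r addr0 mulN1r addrC subr_ge0 ler_nat leq_pexp2l.
Qed.

Lemma valp_in_suppp (p : {poly K}) : p != 0 -> valp p \in suppp p.
Proof.
move=> p_neq0; rewrite /suppp mem_filter mem_iota /= add0n.
have has_nz : has (fun c => c != 0) p.
  apply/hasP; exists (lead_coef p); last by rewrite lead_coef_eq0.
  by rewrite lead_coefE; apply: mem_nth; rewrite prednK // size_poly_gt0.
by rewrite /valp -has_find has_nz andbT; exact: (nth_find 0 has_nz).
Qed.

Lemma valp_in_PL (i : nat) : (i <= n)%N -> a i != 0 ->
  (((l ^ i)%:R, (valp (a i))%:R) : rat * rat) \in PL l n a.
Proof.
move=> le_in ai_neq0.
apply: (allpairs_f_dep (fun i j => (((l ^ i)%:R : rat), (j%:R : rat)))).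
  by rewrite mem_iota add0n ltnS.
exact: valp_in_suppp.
Qed.

Lemma Delta_nil_PL (w : rat) (p : rat * rat) :
  Delta l n a w = [::] -> p \in PL l n a -> (psi l n a w - p.2) / p.1 = w.
Proof.
move=> Delta_nil PLp; apply/eqP/negPn/negP => neq_w.
suff : (psi l n a w - p.2) / p.1 \in Delta l n a w by rewrite Delta_nil.
by rewrite mem_filter neq_w (map_f (fun p => (psi l n a w - p.2) / p.1)).
Qed.

Lemma Delta_nil_valp (w : rat) (i : nat) :
  Delta l n a w = [::] -> (i <= n)%N -> a i != 0 ->
  (valp (a i))%:R = psi l n a w - w * (l ^ i)%:R.
Proof.
move=> Delta_nil le_in ai_neq0.
have := Delta_nil_PL Delta_nil (valp_in_PL le_in ai_neq0).
move=> /(congr1 (fun x => x * (l ^ i)%:R)) /=.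
by rewrite divfK ?pnatr_eq0 -?lt0n ?expn_gt0 ?l_gt0 // => <-; ring.
Qed.

Lemma Delta_nil_newton_polygon_above (w : rat) (p : rat * rat) :
  Delta l n a w = [::] -> newton_polygon l n a p ->
  psi l n a w - w * p.1 <= p.2.
Proof.
move=> Delta_nil NPp; rewrite -subr_ge0.
rewrite (_ : _ - _ = w * p.1 + 1 * p.2 + - psi l n a w); last by ring.
apply: (newton_polygon_halfplane _ NPp) => q [i [le_in [ai_neq0 [-> val_le]]]].
by rewrite (Delta_nil_valp Delta_nil le_in ai_neq0) in val_le; lra.
Qed.

Lemma Delta_nil_newton_polygon_on_line (w : rat) (i : nat) :
  Delta l n a w = [::] -> (i <= n)%N -> a i != 0 ->
  newton_polygon l n a ((l ^ i)%:R, psi l n a w - w * (l ^ i)%:R).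
Proof.
move=> Delta_nil le_in ai_neq0; apply: NPgen_newton_polygon.
by exists i; rewrite (Delta_nil_valp Delta_nil le_in ai_neq0).
Qed.

End NewtonPolygon.

Theorem mainTheorem14 (K : fieldType) (l n : nat) (a : nat -> {poly K}) (d : nat) (w : rat) :
  (2 <= l)%N -> (1 <= n)%N -> a 0%N != 0 -> a n != 0 ->
  (1 <= d)%N ->
  (forall mu, edge_slope l n a mu -> (denq mu %| (d%:Z))%Z) ->
  Zdl d l w ->
  Delta l n a w = [::] ->
  (* kappa = 1 and mu_1 = -w : the set of edge slopes is exactly {-w} *)
  (forall mu, edge_slope l n a mu <-> mu = - w).
Proof.
move=> l_ge2 n_ge1 a0_neq0 an_neq0 _ _ _ Delta_nil mu.
have l_gt0 : (0 < l)%N by apply: leq_trans l_ge2.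
have lt_1_ln : 1 < (l ^ n)%:R :> rat by rewrite ltr1n -[X in (X < _)%N](expn0 l) ltn_exp2l.
apply: (supporting_line_slopeE (c0 := psi l n a w) lt_1_ln).
- exact: newton_polygon_abscissa.
- by move=> p; apply: Delta_nil_newton_polygon_above.
- by have := Delta_nil_newton_polygon_on_line l_gt0 Delta_nil (leq0n n) a0_neq0; rewrite expn0.
- exact (Delta_nil_newton_polygon_on_line l_gt0 Delta_nil (leqnn n) an_neq0).
Qed.
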